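(* Let $K$ be a convex quadrilateral with bilinear map $F_K:(-1,1)^2\to K$ and $r\ge1$. Then for every $q\in P_{r-1}(K,\mathbb R)$ the tensor field $q\begin{pmatrix}0&1\\-1&0\end{pmatrix}$ belongs to $\Psi_r(K,\mathbb M)=\{(\hat\tau\circ F_K^{-1})DF_K^{-1}:$ each row of $\hat\tau$ lies in $P_{r-1,r}(\hat K)\times P_{r,r-1}(\hat K)\}$.
   Context: $\hat K=(-1,1)^2$, $F_K$ is bilinear (each component is in $Q_1(\hat K)$) and bijective onto the convex quadrilateral $K$; $DF_K$ is its Jacobian matrix (evaluated at $\hat x=F_K^{-1}(x)$). $P_{a,b}(\hat K)$ denotes polynomials of degree $\le a$ in $\hat x_1$ and $\le b$ in $\hat x_2$; $P_{r-1}(K,\mathbb R)$ denotes polynomials of total degree $\le r-1$ in the physical coordinates $x$. *)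

From HB Require Import structures.
From mathcomp Require Import all_boot all_order all_algebra.
Set Implicit Arguments. Unset Strict Implicit. Unset Printing Implicit Defensive.
Import Order.TTheory GRing.Theory Num.Theory.
Local Open Scope ring_scope.

Section Defs.
Variable R : realFieldType.

Definition pt := (R * R)%type.

Definition isPab (a b : nat) (f : R -> R -> R) : Prop :=
  exists c : nat -> nat -> R, forall x1 x2 : R,
    f x1 x2 = \sum_(i < a.+1) \sum_(j < b.+1) c i j * x1 ^+ i * x2 ^+ j.

Definition isPtot (n : nat) (f : R -> R -> R) : Prop :=
  exists c : nat -> nat -> R, forall x1 x2 : R,
    f x1 x2 = \sum_(i < n.+1) \sum_(j < n.+1 | (i + j <= n)%N) c i j * x1 ^+ i * x2 ^+ j.

Definition cross (a b : pt) : R := a.1 * b.2 - a.2 * b.1.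
Definition vsub (a b : pt) : pt := (a.1 - b.1, a.2 - b.2).
Definition turn (a b c : pt) : R := cross (vsub b a) (vsub c b).

Definition convex_quad (v1 v2 v3 v4 : pt) : Prop :=
  (0 < turn v1 v2 v3 /\ 0 < turn v2 v3 v4 /\ 0 < turn v3 v4 v1 /\ 0 < turn v4 v1 v2)
  \/ (turn v1 v2 v3 < 0 /\ turn v2 v3 v4 < 0 /\ turn v3 v4 v1 < 0 /\ turn v4 v1 v2 < 0).

(* The bilinear map F_K : K^ = (-1,1)^2 -> K sending the reference vertices
   (-1,-1),(1,-1),(1,1),(-1,1) to v1,v2,v3,v4; each component is in Q_1. *)
Definition bilin (v1 v2 v3 v4 : pt) (s t : R) : pt :=
  let N1 := (1 - s) * (1 - t) / 4 in
  let N2 := (1 + s) * (1 - t) / 4 in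
  let N3 := (1 + s) * (1 + t) / 4 in
  let N4 := (1 - s) * (1 + t) / 4 in
  (N1 * v1.1 + N2 * v2.1 + N3 * v3.1 + N4 * v4.1,
   N1 * v1.2 + N2 * v2.2 + N3 * v3.2 + N4 * v4.2).

(* Jacobian DF_K at (s,t): entry (i,j) = d F_i / d x^_j. *)
Definition dFds (v1 v2 v3 v4 : pt) (s t : R) : pt :=
  ((- (1 - t) * v1.1 + (1 - t) * v2.1 + (1 + t) * v3.1 - (1 + t) * v4.1) / 4,
   (- (1 - t) * v1.2 + (1 - t) * v2.2 + (1 + t) * v3.2 - (1 + t) * v4.2) / 4).
Definition dFdt (v1 v2 v3 v4 : pt) (s t : R) : pt :=
  ((- (1 - s) * v1.1 - (1 + s) * v2.1 + (1 + s) * v3.1 + (1 - s) * v4.1) / 4,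
   (- (1 - s) * v1.2 - (1 + s) * v2.2 + (1 + s) * v3.2 + (1 - s) * v4.2) / 4).

Definition mx2 (a b c d : R) : 'M[R]_2 :=
  \matrix_(i < 2, j < 2)
    if (i == 0 :> nat) then (if (j == 0 :> nat) then a else b)
    else (if (j == 0 :> nat) then c else d).

Definition DF (v1 v2 v3 v4 : pt) (s t : R) : 'M[R]_2 :=
  let a := dFds v1 v2 v3 v4 s t in
  let b := dFdt v1 v2 v3 v4 s t in
  mx2 a.1 b.1 a.2 b.2.

Definition Jskew : 'M[R]_2 := mx2 0 1 (-1) 0.

Definition i0 : 'I_2 := @Ordinal 2 0 isT.
Definition i1 : 'I_2 := @Ordinal 2 1 isT.

Definition rows_ok (r : nat) (tau : R -> R -> 'M[R]_2) : Prop :=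
  forall i : 'I_2,
    isPab r.-1 r (fun s t => tau s t i i0) /\ isPab r r.-1 (fun s t => tau s t i i1).

End Defs.

(* With tau := (q o F_K) * J * DF_K one has tau * DF_K^-1 = q J.  The rows of
   J * DF_K are (d_s F_2, d_t F_2) and -(d_s F_1, d_t F_1); since F_K is bilinear
   these entries lie in P_{0,1} x P_{1,0}, while q o F_K lies in P_{r-1,r-1}, so
   the rows of tau lie in P_{r-1,r} x P_{r,r-1}.  DF_K is invertible on the open
   square because 16 det DF_K is the combination of the four corner turns of K
   with the (positive) bilinear nodal weights, and convexity gives all turns the
   same sign. *)

From HB Require Import structures.
From mathcomp Require Import all_boot all_order all_algebra.
From mathcomp Require Import ring lra.
Import Order.TTheory GRing.Theory Num.Theory.
Local Open Scope ring_scope.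

Set Implicit Arguments.
Unset Strict Implicit.
Unset Printing Implicit Defensive.

Section PolynomialSpaces.
Variable R : realFieldType.
Implicit Types (a b : nat) (f g : R -> R -> R).

Lemma eq_isPab a b f g : f =2 g -> isPab a b f -> isPab a b g.
Proof. by move=> fg [c Hc]; exists c => x y; rewrite -fg Hc. Qed.

Lemma isPab0 a b : isPab a b (fun _ _ : R => 0).
Proof.
by exists (fun _ _ => 0) => x y; rewrite big1 // => i _; rewrite big1 // => j _; rewrite !mul0r.
Qed.

Lemma isPabD a b f g : isPab a b f -> isPab a b g -> isPab a b (fun x y => f x y + g x y).
Proof.
move=> [c Hc] [e He]; exists (fun i j => c i j + e i j) => x y.
rewrite Hc He -big_split; apply: eq_bigr => i _; rewrite -big_split.
by apply: eq_bigr => j _; rewrite !mulrDl.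
Qed.

Lemma isPabZ a b k f : isPab a b f -> isPab a b (fun x y => k * f x y).
Proof.
move=> [c Hc]; exists (fun i j => k * c i j) => x y.
rewrite Hc mulr_sumr; apply: eq_bigr => i _; rewrite mulr_sumr.
by apply: eq_bigr => j _; rewrite !mulrA.
Qed.

Lemma isPab_sum a b (I : Type) (s : seq I) (P : pred I) (F : I -> R -> R -> R) :
  (forall i, P i -> isPab a b (F i)) -> isPab a b (fun x y => \sum_(i <- s | P i) F i x y).
Proof.
move=> HF; elim: s => [|i s IHs].
  by apply: (eq_isPab _ (isPab0 a b)) => x y; rewrite big_nil.
case Pi: (P i).
  by apply: (eq_isPab _ (isPabD (HF i Pi) IHs)) => x y; rewrite big_cons Pi.
by apply: (eq_isPab _ IHs) => x y; rewrite big_cons Pi.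
Qed.

Lemma sum_ord_delta n i (x : R) : (i <= n)%N ->
  \sum_(k < n.+1) (k == i :> nat)%:R * x ^+ k = x ^+ i.
Proof.
move=> le_in; rewrite (eq_bigr (fun k : 'I_n.+1 => if k == i :> nat then x ^+ k else 0)).
  by rewrite -big_mkcond big_ord1_eq ltnS le_in.
by move=> k _; case: eqP => _; rewrite (mul1r, mul0r).
Qed.

Lemma isPab_monomial a b i j : (i <= a)%N -> (j <= b)%N ->
  isPab a b (fun x y : R => x ^+ i * y ^+ j).
Proof.
move=> le_ia le_jb; exists (fun k l => (k == i)%:R * (l == j)%:R) => x y.
rewrite -(sum_ord_delta x le_ia) -(sum_ord_delta y le_jb) big_distrlr /=.
by apply: eq_bigr => k _; apply: eq_bigr => l _; ring.
Qed.

Lemma isPab_widen a b a' b' f : (a <= a')%N -> (b <= b')%N -> isPab a b f -> isPab a' b' f.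
Proof.
move=> le_aa le_bb [c Hc]; apply: (eq_isPab (fun x y => esym (Hc x y))).
apply: isPab_sum => i _; apply: isPab_sum => j _.
have le_ia : (i <= a')%N by apply: leq_trans le_aa; rewrite -ltnS.
have le_jb : (j <= b')%N by apply: leq_trans le_bb; rewrite -ltnS.
by apply: (eq_isPab _ (isPabZ (c i j) (isPab_monomial le_ia le_jb))) => x y; rewrite mulrA.
Qed.

Lemma isPabM a b a' b' f g : isPab a b f -> isPab a' b' g ->
  isPab (a + a') (b + b') (fun x y => f x y * g x y).
Proof.
move=> [c Hc] [e He]; apply: (eq_isPab (fun x y => esym (congr2 *%R (Hc x y) (He x y)))).
apply: (@eq_isPab _ _ (fun x y => \sum_(i < a.+1) \sum_(j < b.+1) \sum_(k < a'.+1) \sum_(l < b'.+1)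
   c i j * e k l * (x ^+ (i + k) * y ^+ (j + l)))).
  move=> x y; rewrite [RHS]mulr_suml; apply: eq_bigr => i _.
  rewrite mulr_suml; apply: eq_bigr => j _; rewrite mulr_sumr; apply: eq_bigr => k _.
  by rewrite mulr_sumr; apply: eq_bigr => l _; rewrite !exprD; ring.
apply: isPab_sum => i _; apply: isPab_sum => j _; apply: isPab_sum => k _.
apply: isPab_sum => l _; apply: isPabZ; apply: isPab_monomial.
  by apply: leq_add; rewrite -ltnS.
by apply: leq_add; rewrite -ltnS.
Qed.

Lemma isPabX a b n f : isPab a b f -> isPab (a * n) (b * n) (fun x y => f x y ^+ n).
Proof.
move=> Hf; elim: n => [|n IHn].
  rewrite !muln0; apply: (eq_isPab _ (isPab_monomial (leqnn 0) (leqnn 0))) => x y.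
  by rewrite !expr0 mulr1.
by rewrite !mulnS; apply: (eq_isPab _ (isPabM Hf IHn)) => x y; rewrite exprS.
Qed.

Lemma isPtot_comp n a b q f g : isPtot n q -> isPab a b f -> isPab a b g ->
  isPab (a * n) (b * n) (fun x y => q (f x y) (g x y)).
Proof.
move=> [c Hc] Hf Hg; apply: (eq_isPab (fun x y => esym (Hc (f x y) (g x y)))).
apply: isPab_sum => i _; apply: isPab_sum => j le_ijn.
have Hfg := isPabM (isPabX i Hf) (isPabX j Hg); rewrite -!mulnDr in Hfg.
have {}Hfg := isPab_widen (leq_mul (leqnn a) le_ijn) (leq_mul (leqnn b) le_ijn) Hfg.
by apply: (eq_isPab _ (isPabZ (c i j) Hfg)) => x y; rewrite mulrA.
Qed.

End PolynomialSpaces.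

Section BilinearMap.
Variable R : realFieldType.
Implicit Types (w : R) (v : pt R).

Lemma isPab_bilin_coord w1 w2 w3 w4 : isPab 1 1 (fun s t : R =>
  (1 - s) * (1 - t) / 4 * w1 + (1 + s) * (1 - t) / 4 * w2
  + (1 + s) * (1 + t) / 4 * w3 + (1 - s) * (1 + t) / 4 * w4).
Proof.
exists (fun i j => match i, j with
  | 0, 0 => w1 + w2 + w3 + w4 | 1, 0 => - w1 + w2 + w3 - w4
  | 0, _ => - w1 - w2 + w3 + w4 | _, _ => w1 - w2 + w3 - w4 end / 4)%N => s t.
by rewrite !big_ord_recl !big_ord0 /= /bump /= !expr0 !expr1; field.
Qed.

Lemma isPab_dFds_coord w1 w2 w3 w4 : isPab 0 1 (fun s t : R =>
  (- (1 - t) * w1 + (1 - t) * w2 + (1 + t) * w3 - (1 + t) * w4) / 4).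
Proof.
exists (fun i j => (if j is 0 then - w1 + w2 + w3 - w4 else w1 - w2 + w3 - w4) / 4)%N => s t.
by rewrite !big_ord_recl !big_ord0 /= /bump /= !expr0 !expr1; field.
Qed.

Lemma isPab_dFdt_coord w1 w2 w3 w4 : isPab 1 0 (fun s t : R =>
  (- (1 - s) * w1 - (1 + s) * w2 + (1 + s) * w3 + (1 - s) * w4) / 4).
Proof.
exists (fun i j => (if i is 0 then - w1 - w2 + w3 + w4 else w1 - w2 + w3 - w4) / 4)%N => s t.
by rewrite !big_ord_recl !big_ord0 /= /bump /= !expr0 !expr1; field.
Qed.

Lemma isPab_comp_bilin n v1 v2 v3 v4 q : isPtot n q ->
  isPab n n (fun s t => q (bilin v1 v2 v3 v4 s t).1 (bilin v1 v2 v3 v4 s t).2).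
Proof.
move=> hq; have := isPtot_comp hq (isPab_bilin_coord v1.1 v2.1 v3.1 v4.1)
  (isPab_bilin_coord v1.2 v2.2 v3.2 v4.2).
by rewrite !mul1n.
Qed.

End BilinearMap.

Section Jacobian.
Variable R : realFieldType.
Implicit Types (a b c d : R) (v : pt R).

Lemma det_mx2 a b c d : \det (mx2 a b c d) = a * d - b * c.
Proof.
rewrite (expand_det_row _ 0) !big_ord_recl big_ord0 /cofactor !det_mx11 !mxE /= /bump /=.
by ring.
Qed.

Lemma Jskew_mul_mx2 a b c d : Jskew R *m mx2 a b c d = mx2 c d (- a) (- b).
Proof.
apply/matrixP => i j; rewrite !mxE !big_ord_recl big_ord0 !mxE /= /bump /=.
by case: i j => [[|[|i]] Hi] [[|[|j]] Hj] //=; ring.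
Qed.

Lemma det_DF_turns v1 v2 v3 v4 s t :
  16 * \det (DF v1 v2 v3 v4 s t) =
  (1 + s) * (1 - t) * turn v1 v2 v3 + (1 + s) * (1 + t) * turn v2 v3 v4
  + (1 - s) * (1 + t) * turn v3 v4 v1 + (1 - s) * (1 - t) * turn v4 v1 v2.
Proof. by rewrite det_mx2 /turn /cross /vsub /=; field. Qed.

Lemma pos_combination_neq0 (w1 w2 w3 w4 a1 a2 a3 a4 : R) :
  0 < w1 -> 0 < w2 -> 0 < w3 -> 0 < w4 ->
  (0 < a1 /\ 0 < a2 /\ 0 < a3 /\ 0 < a4) \/ (a1 < 0 /\ a2 < 0 /\ a3 < 0 /\ a4 < 0) ->
  w1 * a1 + w2 * a2 + w3 * a3 + w4 * a4 != 0.
Proof.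
move=> w1_gt0 w2_gt0 w3_gt0 w4_gt0 [[h1 [h2 [h3 h4]]] | [h1 [h2 [h3 h4]]]].
  by rewrite gt_eqF // !addr_gt0 // mulr_gt0.
by rewrite -oppr_eq0 !opprD -!mulrN gt_eqF // !addr_gt0 // mulr_gt0 // oppr_gt0.
Qed.

Lemma DF_unitmx v1 v2 v3 v4 s t : convex_quad v1 v2 v3 v4 ->
  -1 < s < 1 -> -1 < t < 1 -> DF v1 v2 v3 v4 s t \in unitmx.
Proof.
move=> hK /andP[s_gt s_lt] /andP[t_gt t_lt].
have det16_neq0 : 16 * \det (DF v1 v2 v3 v4 s t) != 0.
  by rewrite det_DF_turns pos_combination_neq0 //; apply: mulr_gt0; lra.
by rewrite unitmxE unitfE; apply: contraNneq det16_neq0 => ->; rewrite mulr0.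
Qed.

Lemma rows_ok_Jskew_DF n v1 v2 v3 v4 (Q : R -> R -> R) :
  isPab n n Q -> rows_ok n.+1 (fun s t => Q s t *: (Jskew R *m DF v1 v2 v3 v4 s t)).
Proof.
move=> hQ; rewrite /rows_ok /=.
have Qds w1 w2 w3 w4 := isPabM hQ (isPab_dFds_coord w1 w2 w3 w4).
have Qdt w1 w2 w3 w4 := isPabM hQ (isPab_dFdt_coord w1 w2 w3 w4).
rewrite !addn0 !addn1 in Qds Qdt.
move=> [[|[|i]] Hi] //; split.
- by apply: (eq_isPab _ (Qds v1.2 v2.2 v3.2 v4.2)) => s t; rewrite /DF Jskew_mul_mx2 !mxE.
- by apply: (eq_isPab _ (Qdt v1.2 v2.2 v3.2 v4.2)) => s t; rewrite /DF Jskew_mul_mx2 !mxE.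
- apply: (eq_isPab _ (Qds (- v1.1) (- v2.1) (- v3.1) (- v4.1))) => s t.
  by rewrite /DF Jskew_mul_mx2 !mxE /=; ring.
- apply: (eq_isPab _ (Qdt (- v1.1) (- v2.1) (- v3.1) (- v4.1))) => s t.
  by rewrite /DF Jskew_mul_mx2 !mxE /=; ring.
Qed.

End Jacobian.

Theorem mainTheorem11 (R : realFieldType) (v1 v2 v3 v4 : pt R) (r : nat)
  (q : R -> R -> R) :
  convex_quad v1 v2 v3 v4 -> (1 <= r)%N -> isPtot r.-1 q ->
  exists tau : R -> R -> 'M[R]_2,
    rows_ok r tau /\
    forall s t : R, -1 < s < 1 -> -1 < t < 1 ->
      let x := bilin v1 v2 v3 v4 s t in
      q x.1 x.2 *: Jskew R = tau s t *m invmx (DF v1 v2 v3 v4 s t).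
Proof.
move=> hK; case: r => [//|n] _ /= hq.
pose Q s t := q (bilin v1 v2 v3 v4 s t).1 (bilin v1 v2 v3 v4 s t).2.
exists (fun s t => Q s t *: (Jskew R *m DF v1 v2 v3 v4 s t)); split.
  exact/rows_ok_Jskew_DF/isPab_comp_bilin.
move=> s t hs ht /=.
by rewrite -scalemxAl -mulmxA mulmxV ?mulmx1 // DF_unitmx.
Qed.
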